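(* Let $n\in\mathbb N$ and $0<\varepsilon,\gamma<1$. Let $H$ be a $3$-graph of order $n$ with $\delta_2(H)\ge(1/2-\gamma)n$. Let $v\in V(H)$ and suppose there are at least $\varepsilon n^3$ edges $e\in E(H)$ such that $v\in L(e)$. Then $|\tilde N_{1,\gamma\varepsilon}(v)|\ge(1/4-3\gamma)n$.
   Context: $\delta_2(H)$ is the minimum over pairs of distinct vertices of the number of edges containing the pair. $K_4^-$ is the $3$-graph with $4$ vertices and $3$ edges. For a $3$-set $T$, $L(T)$ is the set of vertices $u$ such that $H[T\cup\{u\}]$ contains a copy of $K_4^-$. For $c\in\mathbb N$, a set $S$ is an $(x,y)$-connector of length $c$ if $S\cap\{x,y\}=\emptyset$, $|S|=4c-1$, and both $H[S\cup\{x\}]$, $H[S\cup\{y\}]$ contain $K_4^-$-factors (vertex-disjoint copies covering all vertices). $x,y$ are $(c,\eta)$-close if there are at least $\eta n^{4c-1}$ $(x,y)$-connectors of length $c$ in $H$. $\tilde N_{c,\eta}(x)$ is the set of vertices $(c,\eta)$-close to $x$. *)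

From HB Require Import structures.
From mathcomp Require Import all_boot all_order all_algebra.
Set Implicit Arguments. Unset Strict Implicit. Unset Printing Implicit Defensive.
Import Order.TTheory GRing.Theory Num.Theory.

Definition is_3graph (V : finType) (E : {set {set V}}) : Prop :=
  forall e, e \in E -> #|e| = 3.

Definition codeg (V : finType) (E : {set {set V}}) (x y : V) : nat :=
  #|[set e in E | (x \in e) && (y \in e)]|.

Definition hasK4m (V : finType) (E : {set {set V}}) (W : {set V}) : bool :=
  [exists a : V, exists b : V, exists c : V, exists d : V,
    [&& [&& a \in W, b \in W, c \in W & d \in W],
        uniq [:: a; b; c; d],
        [set a; b; c] \in E, [set a; b; d] \in E & [set a; c; d] \in E]].

Definition Lset (V : finType) (E : {set {set V}}) (T : {set V}) : {set V} :=
  [set u | hasK4m E (u |: T)].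

Definition K4m_factor (V : finType) (E : {set {set V}}) (W : {set V}) : bool :=
  [exists P : {set {set V}},
    partition P W && [forall B in P, (#|B| == 4) && hasK4m E B]].

Definition connector (V : finType) (E : {set {set V}}) (c : nat) (x y : V)
    (S : {set V}) : bool :=
  [&& x \notin S, y \notin S, #|S| == (4 * c).-1,
      K4m_factor E (x |: S) & K4m_factor E (y |: S)].

Definition close (R : realFieldType) (V : finType) (E : {set {set V}})
    (c : nat) (eta : R) (x y : V) : bool :=
  (eta * (#|V|%:R) ^+ (4 * c)%N.-1 <=
     (#|[set S : {set V} | connector E c x y S]|%:R : R))%R.

Definition closeN (R : realFieldType) (V : finType) (E : {set {set V}})
    (c : nat) (eta : R) (x : V) : {set V} :=
  [set y | close E c eta x y].

From HB Require Import structures.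
From mathcomp Require Import all_boot all_order all_algebra.
Import Order.TTheory GRing.Theory Num.Theory.
From mathcomp Require Import lra zify.
Set Implicit Arguments. Unset Strict Implicit.

(* Fix an edge e = abc.  A vertex u outside e that spans edges with two of
   the pairs ab, ac, bc gives a K_4^- on e + u, so u lies in L(e); counting
   the third vertices of the edges through ab, ac and bc therefore yields
   codeg(ab) + codeg(ac) + codeg(bc) <= n + 2|L(e)|, i.e.
   |L(e)| >= (1/4 - 3 gamma/2) n.  If v and y both lie in L(e), then e itself
   is a (v,y)-connector of length 1.  Double count the pairs (e, y) with
   y in L(e) over the t >= eps n^3 edges e with v in L(e): a vertex y that is
   not close to v occurs fewer than gamma eps n^3 <= gamma t times, any other
   vertex at most t times, so t (1/4 - 3 gamma/2) n <= t (|N(v)| + gamma n). *)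

Lemma sum_card_exchange (I V : finType) (T : {set I}) (F : I -> {set V}) :
  \sum_(e in T) #|F e| = \sum_(y : V) #|[set e in T | y \in F e]|.
Proof.
under eq_bigr do rewrite -sum1_card.
rewrite (exchange_big_dep xpredT) //=; apply: eq_bigr => y _.
by rewrite sum1dep_card.
Qed.

Lemma set3_swap12 (V : finType) (x y z : V) : [set y; x; z] = [set x; y; z].
Proof. by rewrite [[set y; x]]setUC. Qed.

Lemma set3_swap23 (V : finType) (x y z : V) : [set x; z; y] = [set x; y; z].
Proof. by rewrite setUAC. Qed.

Lemma cards3 (V : finType) (a b c : V) :
  a != b -> a != c -> b != c -> #|[set a; b; c]| = 3.
Proof.
move=> ab ac bc.
by rewrite setUC cardsU1 cards2 ab !inE negb_or eq_sym ac eq_sym bc.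
Qed.

Lemma card3P (V : finType) (e : {set V}) : #|e| = 3 ->
  exists a b c, [/\ a != b, a != c, b != c & e = [set a; b; c]].
Proof.
move=> e3; have /card_gt0P[a ae] : 0 < #|e| by rewrite e3.
have /cards2P[b [c [bc ea]]] : #|e :\ a| == 2.
  by move: e3; rewrite (cardsD1 a) ae; lia.
have /setD1P[ba _] : b \in e :\ a by rewrite ea !inE eqxx.
have /setD1P[ca _] : c \in e :\ a by rewrite ea !inE eqxx orbT.
exists a, b, c; split; rewrite 1?[a == _]eq_sym //.
by rewrite -(setD1K ae) ea setUA.
Qed.

Lemma card_set_in_sum (T : finType) (A : {set T}) (p : pred T) :
  #|[set x in A | p x]| = \sum_(x in A) p x.
Proof.
rewrite -sum1dep_card big_mkcondr /=; apply: eq_bigr => x _.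
by case: (p x).
Qed.

Section Hypergraph.

Variables (V : finType) (E : {set {set V}}).

Lemma hasK4m_card (W : {set V}) : hasK4m E W -> 4 <= #|W|.
Proof.
case/existsP=> a /existsP[b /existsP[c /existsP[d /and5P[/and4P[aW bW cW dW] U _ _ _]]]].
have <- : #|[:: a; b; c; d]| = 4 := card_uniqP U.
apply/subset_leq_card/subsetP => x.
by rewrite !inE => /or4P[] /eqP->.
Qed.

Lemma hasK4m_center (x y z w : V) :
  uniq [:: x; y; z; w] ->
  [set x; y; z] \in E -> [set x; y; w] \in E -> [set x; z; w] \in E ->
  hasK4m E (w |: [set x; y; z]).
Proof.
move=> U xyz xyw xzw; apply/existsP; exists x; apply/existsP; exists y.
apply/existsP; exists z; apply/existsP; exists w.
by rewrite U xyz xyw xzw !inE !eqxx !orbT.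
Qed.

Lemma link_count_le (a b c u : V) :
  uniq [:: a; b; c; u] -> [set a; b; c] \in E ->
  ([set a; b; u] \in E) + ([set a; c; u] \in E) + ([set b; c; u] \in E)
    <= 1 + 2 * (u \in Lset E [set a; b; c]).
Proof.
move=> U abc; rewrite inE; case K4: hasK4m => /=.
  by do 3 case: (_ \in E).
have {}K4 x y z w : [set x; y; z] \in E ->
    uniq [:: x; y; z; w] -> w |: [set x; y; z] = u |: [set a; b; c] ->
    [set x; y; w] \in E -> [set x; z; w] \in E -> False.
  move=> xyz Uxyzw eq_xyzw xyw xzw.
  by move: (hasK4m_center Uxyzw xyz xyw xzw); rewrite eq_xyzw K4.
move: U => /and4P[]; rewrite !inE !negb_or => /and3P[ab ac au] /andP[bc bu] cu _.
have ba : b != a by rewrite eq_sym.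
have ca : c != a by rewrite eq_sym.
have cb : c != b by rewrite eq_sym.
have abu_acu : ~~ [&& [set a; b; u] \in E & [set a; c; u] \in E].
  apply/negP => /andP[abu acu]; apply: (K4 a b c u) => //=.
  by rewrite !inE !negb_or ab ac au bc bu cu.
have abu_bcu : ~~ [&& [set a; b; u] \in E & [set b; c; u] \in E].
  apply/negP => /andP[abu bcu]; apply: (K4 b a c u); rewrite ?(set3_swap12 a b) //=.
  by rewrite !inE !negb_or ba bc bu ac au cu.
have acu_bcu : ~~ [&& [set a; c; u] \in E & [set b; c; u] \in E].
  apply/negP => /andP[acu bcu]; apply: (K4 c a b u);
    rewrite ?(set3_swap12 a c) ?(set3_swap23 a b c) ?(set3_swap12 b c) //=.
  by rewrite !inE !negb_or ca cb cu ab au bu.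
move: abu_acu abu_bcu acu_bcu.
by do 3 case: (_ \in E).
Qed.

Lemma K4m_factor_block (W : {set V}) : #|W| = 4 -> hasK4m E W -> K4m_factor E W.
Proof.
move=> W4 K; apply/existsP; exists [set W].
rewrite /partition cover1 eqxx trivIset1 inE eq_sym -cards_eq0 W4 /=.
by apply/forallP=> B; apply/implyP; rewrite inE => /eqP->; rewrite W4 eqxx.
Qed.

Lemma Lset_K4m_factor (e : {set V}) u : #|e| = 3 -> u \in Lset E e ->
  (u \notin e) && K4m_factor E (u |: e).
Proof.
rewrite inE => e3 K.
have ue : u \notin e by move: (hasK4m_card K); rewrite cardsU1 e3; case: (u \in e).
by rewrite ue; apply: K4m_factor_block K; rewrite cardsU1 e3 ue.
Qed.

Lemma connector1_Lset (e : {set V}) v y : #|e| = 3 ->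
  v \in Lset E e -> y \in Lset E e -> connector E 1 v y e.
Proof.
move=> e3 /(Lset_K4m_factor e3)/andP[ve Kv] /(Lset_K4m_factor e3)/andP[ye Ky].
by rewrite /connector ve ye e3 Kv Ky.
Qed.

Hypothesis E3 : is_3graph E.

Lemma edge_through_pair (f : {set V}) (a b : V) :
  f \in E -> a != b -> a \in f -> b \in f ->
  exists2 u, u \notin [set a; b] & f = [set a; b; u].
Proof.
move=> fE ab af bf.
have sab : [set a; b] \subset f by apply/subsetP=> t; rewrite !inE => /orP[]/eqP->.
have /cards1P[u fu] : #|f :\: [set a; b]| == 1.
  by rewrite cardsD (setIidPr sab) E3 // cards2 ab.
have : u \in f :\: [set a; b] by rewrite fu inE.
rewrite inE => /andP[uab _]; exists u => //.
by rewrite -{1}(setID f [set a; b]) (setIidPr sab) fu.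
Qed.

Lemma codeg_le_third (a b c : V) : a != b ->
  codeg E a b <= 1 + #|[set u in ~: [set a; b; c] | [set a; b; u] \in E]|.
Proof.
move=> ab; set A := [set u in _ | _].
have sub : [set f in E | (a \in f) && (b \in f)] \subset
           (fun u => [set a; b; u]) @: (c |: A).
  apply/subsetP=> f; rewrite inE => /and3P[fE af bf].
  have [u uab fu] := edge_through_pair fE ab af bf.
  apply/imsetP; exists u => //.
  rewrite !inE -fu fE andbT; case: eqP => //= _.
  by move: uab; rewrite !inE orbF.
rewrite /codeg (leq_trans (subset_leq_card sub)) //.
by rewrite (leq_trans (leq_imset_card _ _)) // cardsU1 leq_add2r leq_b1.
Qed.

Lemma codeg_sum_le (a b c : V) : uniq [:: a; b; c] -> [set a; b; c] \in E ->
  codeg E a b + codeg E a c + codeg E b c <= #|V| + 2 * #|Lset E [set a; b; c]|.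
Proof.
rewrite /= !inE !negb_or andbT => /andP[/andP[ab ac] bc] abc.
set e := [set a; b; c]; set L := Lset E e.
have cab := codeg_le_third c ab.
have cac := codeg_le_third b ac; rewrite set3_swap23 in cac.
have cbc := codeg_le_third a bc.
rewrite (set3_swap23 b a c) (set3_swap12 a b c) in cbc.
have links : #|[set u in ~: e | [set a; b; u] \in E]| +
             #|[set u in ~: e | [set a; c; u] \in E]| +
             #|[set u in ~: e | [set b; c; u] \in E]| <= #|~: e| + 2 * #|L|.
  have Ue u : u \in ~: e -> uniq [:: a; b; c; u].
    rewrite !inE !negb_or /= => /andP[/andP[ua ub] uc].
    by rewrite !inE !negb_or ab ac bc !(eq_sym _ u) ua ub uc.
  rewrite !card_set_in_sum -!big_split /=.
  apply: (@leq_trans (\sum_(u in ~: e) (1 + 2 * (u \in L)))).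
    by apply: leq_sum => u ue; apply: link_count_le (Ue u ue) abc.
  rewrite big_split /= sum1_card -big_distrr /= -card_set_in_sum.
  rewrite leq_add2l leq_mul2l /=.
  by apply/subset_leq_card/subsetP => u; rewrite inE => /andP[].
have cardV : #|V| = 3 + #|~: e| by rewrite -(cardsC e) cards3.
rewrite -/e in cab cac cbc; rewrite cardV; lia.
Qed.

Lemma card_common_link_le_connectors v y :
  #|[set e in [set e in E | v \in Lset E e] | y \in Lset E e]|
    <= #|[set S | connector E 1 v y S]|.
Proof.
apply/subset_leq_card/subsetP => e /setIdP[/setIdP[eE ve] ye]; rewrite inE.
exact: connector1_Lset (E3 eE) ve ye.
Qed.

End Hypergraph.

Local Open Scope ring_scope.

Lemma Lset_card_lb (R : realFieldType) (V : finType) (E : {set {set V}}) (d : R) e :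
  is_3graph E -> (forall x y : V, x != y -> d <= (codeg E x y)%:R) -> e \in E ->
  3 * d <= #|V|%:R + 2 * #|Lset E e|%:R.
Proof.
move=> E3 mindeg eE; have [a [b [c [ab ac bc def_e]]]] := card3P (E3 e eE).
rewrite def_e in eE *.
have abc : uniq [:: a; b; c] by rewrite /= !inE !negb_or ab ac bc.
have := codeg_sum_le E3 abc eE; rewrite -(ler_nat R) !natrD.
have := mindeg _ _ ab; have := mindeg _ _ ac; have := mindeg _ _ bc.
lra.
Qed.

Lemma double_count_lb (R : realFieldType) (I V : finType) (T : {set I})
    (F : I -> {set V}) (N : {set V}) (lb delta : R) :
  (forall e, e \in T -> lb <= #|F e|%:R) ->
  (forall y, y \notin N -> #|[set e in T | y \in F e]|%:R <= delta) ->
  #|T|%:R * lb <= #|T|%:R * #|N|%:R + #|~: N|%:R * delta.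
Proof.
move=> Flb Ndelta.
have lower : #|T|%:R * lb <= (\sum_(e in T) #|F e|)%:R.
  by rewrite mulr_natl -sumr_const natr_sum; apply: ler_sum.
apply: le_trans lower _; rewrite sum_card_exchange natr_sum (bigID (mem N)) /=.
rewrite lerD //.
  rewrite mulr_natr -sumr_const; apply: ler_sum => y _.
  by rewrite ler_nat; apply/subset_leq_card/subsetP => e /setIdP[].
rewrite mulr_natl -sumr_const [X in _ <= X](eq_bigl (fun y => y \notin N)).
  exact: ler_sum.
by move=> y; rewrite inE.
Qed.

Theorem proposition5p7 (R : realFieldType) (V : finType) (E : {set {set V}})
    (n : nat) (eps gamma : R) (v : V) :
  #|V| = n ->
  0 < eps -> eps < 1 -> 0 < gamma -> gamma < 1 ->
  is_3graph E ->
  (forall x y : V, x != y -> (1/2 - gamma) * n%:R <= (codeg E x y)%:R) ->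
  eps * n%:R ^+ 3 <= (#|[set e in E | v \in Lset E e]|)%:R ->
  (1/4 - 3 * gamma) * n%:R <= (#|closeN E 1 (gamma * eps) v|)%:R.
Proof.
move=> cardV eps_gt0 _ gamma_gt0 _ E3 mindeg many_links.
have [->|n_gt0] := posnP n; first by rewrite mulr0.
set T := [set e in E | v \in Lset E e] in many_links *.
set N := closeN E 1 (gamma * eps) v.
have T_gt0 : 0 < #|T|%:R :> R.
  by apply: lt_le_trans many_links; rewrite mulr_gt0 // exprn_gt0 // ltr0n.
have link_lb e : e \in T -> (1/4 - 3/2 * gamma) * n%:R <= #|Lset E e|%:R.
  case/setIdP => eE _; have := Lset_card_lb E3 mindeg eE; rewrite cardV; lra.
have far_few y : y \notin N -> #|[set e in T | y \in Lset E e]|%:R <= gamma * #|T|%:R.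
  rewrite inE /close -ltNge cardV => few_connectors.
  apply: (le_trans (y := gamma * eps * n%:R ^+ 3)); last first.
    by rewrite -mulrA ler_wpM2l // ltW.
  apply/ltW/le_lt_trans/few_connectors.
  by rewrite ler_nat card_common_link_le_connectors.
have coN : #|~: N|%:R * (gamma * #|T|%:R) <= n%:R * (gamma * #|T|%:R).
  apply: ler_wpM2r; first by rewrite mulr_ge0 // ltW.
  rewrite ler_nat -cardV; exact: max_card.
have : #|T|%:R * ((1/4 - 3/2 * gamma) * n%:R) <= #|T|%:R * (#|N|%:R + gamma * n%:R).
  have := double_count_lb link_lb far_few; lra.
rewrite ler_pM2l // => N_lb.
have : 0 <= gamma * n%:R by rewrite mulr_ge0 // ltW.
lra.
Qed.
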